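(* Let $(x_n,y_n)_{n=1}^N$ be labeled points with $x_n$ in a bounded subset of $\mathbb{H}^{d}$ and $y_n\in\{-1,1\}$, and assume the point set is linearly separable with margin $\varepsilon>0$, i.e. there is $w^*\in\mathbb{R}^{d+1}$ with $[w^*,w^*]=-C_{\mathbb H}$ and $y_n\,\mathrm{asinh}([w^*,x_n])\ge\varepsilon$ for all $n$. Consider the hyperbolic perceptron: start with $w^0=0\in\mathbb{R}^{d+1}$, cycle through $n=1,\dots,N,1,\dots$, and whenever $\mathrm{sgn}([w^k,x_n])\ne y_n$ update $w^{k+1}=w^k+y_nHx_n$. Then this perceptron converges in $O\big(1/\sinh^2(\varepsilon)\big)$ steps.
   Context: $\mathbb{H}^{d}=\{x\in\mathbb{R}^{d+1}:[x,x]=C_{\mathbb H}^{-1},x_1>0\}$ is the Lorentz ('Loid) model of hyperbolic space with curvature $C_{\mathbb H}<0$, where $[u,v]=u^\top Hv$ and $H=\mathrm{diag}(-1,1,\dots,1)\in\mathbb{R}^{(d+1)\times(d+1)}$. Convergence means that after the stated number of updates all points are correctly classified by $x\mapsto\mathrm{sgn}([w^k,x])$. *)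

From mathcomp Require Import all_boot all_order all_algebra.
From mathcomp Require Import all_classical all_reals all_analysis.
Set Implicit Arguments. Unset Strict Implicit. Unset Printing Implicit Defensive.
Import Order.TTheory GRing.Theory Num.Theory.
Local Open Scope ring_scope.

Definition sinh {R : realType} (x : R) : R := (expR x - expR (- x)) / 2.
Definition asinh {R : realType} (x : R) : R := ln (x + Num.sqrt (x ^+ 2 + 1)).

Definition minkH {R : realType} (d : nat) : 'M[R]_(d.+1) :=
  diag_mx (\row_(i < d.+1) (if i == ord0 then -1 else 1)).

Definition mink {R : realType} {d : nat} (u v : 'cV[R]_(d.+1)) : R :=
  (u^T *m minkH d *m v) ord0 ord0.

Definition in_loid {R : realType} {d : nat} (C : R) (x : 'cV[R]_(d.+1)) : Prop :=
  mink x x = C^-1 /\ 0 < x ord0 ord0.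

Definition eucl_norm2 {R : realType} {d : nat} (v : 'cV[R]_(d.+1)) : R :=
  \sum_(i < d.+1) v i ord0 ^+ 2.

(* Hyperbolic perceptron, processed point by point cyclically (n = t mod N).
   perc_traj x y t = (w, k): weight vector after processing t points,
   and number k of updates performed so far.  w^0 = 0;
   update w <- w + y_n H x_n whenever sgn([w,x_n]) <> y_n. *)
Fixpoint perc_traj {R : realType} {d N : nat}
    (x : 'I_N -> 'cV[R]_(d.+1)) (y : 'I_N -> R) (t : nat)
    : 'cV[R]_(d.+1) * nat :=
  match t with
  | 0 => (0, 0%N)
  | t'.+1 =>
      let: (w, k) := perc_traj x y t' in
      match (insub (t' %% N)%N : option 'I_N) with
      | Some n =>
          if Num.sg (mink w (x n)) != y n
          then (w + y n *: (minkH d *m x n), k.+1)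
          else (w, k)
      | None => (w, k)
      end
  end.

From mathcomp Require Import all_boot all_order all_algebra.
From mathcomp Require Import all_classical all_reals all_analysis.
From mathcomp Require Import ring lra zify.
Import Order.TTheory GRing.Theory Num.Theory.
Local Open Scope ring_scope.
Set Implicit Arguments. Unset Strict Implicit.

(* Novikoff's argument, with the Euclidean inner product <u, v> = u^T v.
   Since <u, H v> = [u, v], the margin assumption (sinh is increasing and
   inverse to asinh) makes every update raise <w*, w> by at least sinh eps,
   while on a mistake y [w, x] <= 0, so |w + y H x|^2 <= |w|^2 + |x|^2 and
   every update raises |w|^2 by at most B.  After k updates Cauchy-Schwarz
   gives (k sinh eps)^2 <= M k B, i.e. k <= B M / sinh^2 eps.  A bounded,
   nondecreasing update count is constant over some full pass through the
   data, and a pass without updates classifies every point correctly. *)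

Section Sinh.
Variable R : realType.

Lemma sinh_asinh (m : R) : sinh (asinh m) = m.
Proof.
rewrite /sinh /asinh; set r := Num.sqrt (m ^+ 2 + 1).
have r_ge0 : 0 <= r by apply: sqrtr_ge0.
have r2 : r ^+ 2 = m ^+ 2 + 1 by rewrite sqr_sqrtr // addr_ge0 // ?sqr_ge0.
have mr_gt0 : 0 < m + r by nra.
rewrite expRN lnK ?posrE //.
have -> : (m + r)^-1 = r - m.
  apply: (@mulfI _ (m + r)); first by rewrite lt0r_neq0.
  by rewrite mulfV ?lt0r_neq0 //; nra.
by field.
Qed.

Lemma sinh_homo : {homo @sinh R : a b / a <= b}.
Proof.
move=> a b ab; rewrite /sinh ler_pM2r ?invr_gt0 //.
by apply: lerB; rewrite ler_expR ?lerN2.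
Qed.

Lemma sinhN (a : R) : sinh (- a) = - sinh a.
Proof. by rewrite /sinh opprK; field. Qed.

Lemma sinh_gt0 (a : R) : 0 < a -> 0 < sinh a.
Proof. by move=> a_gt0; rewrite /sinh divr_gt0 // subr_gt0 ltr_expR; lra. Qed.

Lemma sinh_le_sign_mul (y m e : R) :
  y = 1 \/ y = -1 -> e <= y * asinh m -> sinh e <= y * m.
Proof.
case=> -> le_e; rewrite ?mul1r ?mulN1r in le_e *.
  by rewrite -[m]sinh_asinh; apply: sinh_homo.
by rewrite -[m]sinh_asinh -sinhN; apply: sinh_homo.
Qed.

End Sinh.

Lemma sg_neq_sign_mul_le0 (R : realDomainType) (y m : R) :
  y = 1 \/ y = -1 -> Num.sg m != y -> y * m <= 0.
Proof. by case=> ->; rewrite sgr_cp0 ?mul1r ?mulN1r ?oppr_le0 -?leNgt -?ltNge. Qed.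

Lemma sqr_le_mul_of_quadratic_ge0 (R : realFieldType) (P Q S : R) :
  0 <= S -> (forall l, 0 <= Q - 2 * l * P + l ^+ 2 * S) -> P ^+ 2 <= Q * S.
Proof.
move=> S_ge0 quad_ge0; have [S0|S_neq0] := eqVneq S 0.
  rewrite S0 mulr0; have [->|P_neq0] := eqVneq P 0; first by rewrite expr2 mulr0.
  (* with S = 0 the quadratic is affine in l, hence unbounded below unless P = 0 *)
  have := quad_ge0 ((Q + 1) / (2 * P)).
  have -> : Q - 2 * ((Q + 1) / (2 * P)) * P = -1 by field.
  by rewrite S0 mulr0 addr0; lra.
have S_gt0 : 0 < S by rewrite lt_def S_neq0.
have := quad_ge0 (P / S).
have -> : Q - 2 * (P / S) * P + (P / S) ^+ 2 * S = (Q * S - P ^+ 2) / S by field.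
by rewrite pmulr_lge0 ?invr_gt0 // subr_ge0.
Qed.

Lemma novikoff_bound (R : realFieldType) (s k p C : R) :
  0 < s -> 0 <= k -> s * k <= p -> p ^+ 2 <= k * C -> k <= `|C| / s ^+ 2.
Proof.
move=> s_gt0 k_ge0 le_sk le_p2.
rewrite ler_pdivlMr ?exprn_gt0 //.
have [k0|k_neq0] := eqVneq k 0; first by rewrite k0 mul0r.
have sk_ge0 : 0 <= s * k by rewrite mulr_ge0 // ltW.
have : k * (k * s ^+ 2) <= k * C by apply: le_trans le_p2; nra.
rewrite ler_pM2l ?lt_def ?k_neq0 // => /le_trans; apply; exact: ler_norm.
Qed.

Section Dot.
Variables (R : realType) (d : nat).
Implicit Types u v w z : 'cV[R]_(d.+1).

Definition dot u v : R := (u^T *m v) ord0 ord0.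

Lemma dotE u v : dot u v = \sum_i u i ord0 * v i ord0.
Proof. by rewrite /dot mxE; apply: eq_bigr => i _; rewrite mxE. Qed.

Lemma dot0r u : dot u 0 = 0.
Proof. by rewrite /dot mulmx0 mxE. Qed.

Lemma dotC u v : dot u v = dot v u.
Proof. by rewrite !dotE; apply: eq_bigr => i _; rewrite mulrC. Qed.

Lemma dotDZr u v z (c : R) : dot u (v + c *: z) = dot u v + c * dot u z.
Proof. by rewrite /dot mulmxDr -scalemxAr !mxE. Qed.

Lemma dotDZ w z (c : R) :
  dot (w + c *: z) (w + c *: z) = dot w w + 2 * c * dot w z + c ^+ 2 * dot z z.
Proof.
rewrite dotDZr [dot (w + _) w]dotC [dot (w + _) z]dotC !dotDZr (dotC z w).
by ring.
Qed.

Lemma dotvv_ge0 u : 0 <= dot u u.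
Proof. by rewrite dotE sumr_ge0 // => i _; rewrite -expr2 sqr_ge0. Qed.

Lemma eucl_norm2E u : eucl_norm2 u = dot u u.
Proof. by rewrite dotE; apply: eq_bigr => i _; rewrite expr2. Qed.

Lemma mink_dot u v : mink u v = dot u (minkH d *m v).
Proof. by rewrite /mink /dot mulmxA. Qed.

Lemma dot_minkH u v : dot (minkH d *m u) (minkH d *m v) = dot u v.
Proof.
rewrite !dotE; apply: eq_bigr => i _; rewrite /minkH !mul_diag_mx !mxE.
by case: (i == ord0); ring.
Qed.

Lemma dot_CauchySchwarz u v : dot u v ^+ 2 <= dot u u * dot v v.
Proof.
apply: sqr_le_mul_of_quadratic_ge0 => [|l]; first exact: dotvv_ge0.
have := dotvv_ge0 (u + (- l) *: v); rewrite dotDZ.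
by congr (_ <= _); ring.
Qed.

End Dot.

Lemma nondecreasing_bounded_plateau (f : nat -> nat) (L n : nat) :
  {homo f : i j / (i <= j)%N} -> (forall t, (f t <= n)%N) ->
  exists t, f (t + L) = f t.
Proof.
move=> f_homo f_le.
suff [//|] : (exists t, f (t + L) = f t) \/ (n.+1 <= f (n.+1 * L))%N.
  by move=> /leq_trans /(_ (f_le _)); rewrite ltnn.
elim: n.+1 => [|j [plateau|IH]]; [by right | by left |].
have := f_homo (j * L)%N (j * L + L)%N (leq_addr _ _).
rewrite leq_eqVlt => /orP[/eqP eq_f|lt_f]; first by left; exists (j * L)%N.
by right; rewrite mulSn addnC; exact: leq_ltn_trans IH lt_f.
Qed.

Section Perceptron.
Variables (R : realType) (d N : nat).
Variables (x : 'I_N -> 'cV[R]_(d.+1)) (y : 'I_N -> R).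
Notation traj := (perc_traj x y).

Definition perc_update (w : 'cV[R]_(d.+1)) (n : 'I_N) :=
  w + y n *: (minkH d *m x n).

Lemma perc_trajS t (n : 'I_N) : (t %% N)%N = n ->
  traj t.+1 = if Num.sg (mink (traj t).1 (x n)) != y n
              then (perc_update (traj t).1 n, (traj t).2.+1) else traj t.
Proof.
move=> tn /=; case: (traj t) => w k /=.
by rewrite tn (valK n : insub (val n) = Some n).
Qed.

Lemma perc_trajS_cases t :
  traj t.+1 = traj t \/
  exists2 n, Num.sg (mink (traj t).1 (x n)) != y n &
             traj t.+1 = (perc_update (traj t).1 n, (traj t).2.+1).
Proof.
rewrite /=; case: (traj t) => w k /=.
case: insub => [n|]; last by left.
by case: ifP => mistake; [right; exists n | left].
Qed.

Lemma perc_count_homo : {homo (fun t => (traj t).2) : i j / (i <= j)%N}.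
Proof.
apply: homo_leq => [//|? ? ?|t]; first exact: leq_trans.
by case: (perc_trajS_cases t) => [->|[n _ ->]].
Qed.

Lemma perc_traj_plateau t L : (traj (t + L)).2 = (traj t).2 ->
  forall i, (i <= L)%N -> traj (t + i) = traj t.
Proof.
move=> plateau; elim=> [|i IH] iL; first by rewrite addn0.
have {}IH := IH (ltnW iL); rewrite addnS -IH.
have count_eq : (traj (t + i).+1).2 = (traj (t + i)).2.
  apply/eqP; rewrite eqn_leq [X in _ && X]perc_count_homo // andbT.
  by rewrite IH -plateau perc_count_homo //; lia.
by case: (perc_trajS_cases (t + i)) count_eq => [//|[n _ ->]] /= /esym /n_Sn.
Qed.

Lemma perc_classified_of_plateau t : (traj (t + N)).2 = (traj t).2 ->
  forall n, Num.sg (mink (traj t).1 (x n)) = y n.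
Proof.
move=> plateau n; have N_gt0 : (0 < N)%N by apply: leq_ltn_trans (ltn_ord n).
(* the step of the pass [t, t + N) that visits point n *)
pose i := ((n + (N - t %% N)) %% N)%N.
have i_lt : (i < N)%N by rewrite ltn_mod.
have tin : ((t + i) %% N)%N = n.
  rewrite modnDmr {1}(divn_eq t N).
  have -> : (t %/ N * N + t %% N + (n + (N - t %% N)) = (t %/ N).+1 * N + n)%N.
    by have := ltn_pmod t N_gt0; rewrite mulSn; lia.
  by rewrite modnMDl modn_small.
have stay := perc_traj_plateau plateau.
have := perc_trajS tin; rewrite -addnS !stay ?(ltnW i_lt) //.
by case: ifP => [_ /(congr1 snd) /n_Sn [] | /negbFE /eqP].
Qed.

Variables (B M eps : R) (wstar : 'cV[R]_(d.+1)).
Hypothesis x_bounded : forall n, eucl_norm2 (x n) <= B.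
Hypothesis y_sign : forall n, y n = 1 \/ y n = -1.
Hypothesis margin : forall n, eps <= y n * asinh (mink wstar (x n)).
Hypothesis wstar_bounded : eucl_norm2 wstar <= M.
Hypothesis eps_gt0 : 0 < eps.

Lemma perc_update_correlation w n :
  dot wstar w + sinh eps <= dot wstar (perc_update w n).
Proof.
by rewrite /perc_update dotDZr -mink_dot lerD2l sinh_le_sign_mul.
Qed.

Lemma perc_update_norm w n : Num.sg (mink w (x n)) != y n ->
  dot (perc_update w n) (perc_update w n) <= dot w w + B.
Proof.
move=> /(sg_neq_sign_mul_le0 (y_sign n)) mistake.
have y2 : y n ^+ 2 = 1 by case: (y_sign n) => ->; rewrite ?sqrrN expr1n.
rewrite /perc_update dotDZ -mink_dot dot_minkH -[dot (x n) _]eucl_norm2E y2 mul1r.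
by have := x_bounded n; lra.
Qed.

Lemma perc_invariant t :
  sinh eps * (traj t).2%:R <= dot wstar (traj t).1 /\
  dot (traj t).1 (traj t).1 <= (traj t).2%:R * B.
Proof.
elim: t => [|t [IHcorr IHnorm]].
  by rewrite /= !dot0r mulr0 mul0r.
case: (perc_trajS_cases t) => [->//|[n mistake ->]] /=.
have := perc_update_correlation (traj t).1 n.
have := perc_update_norm mistake.
rewrite -natr1; split; lra.
Qed.

Lemma perc_count_bound t : (traj t).2%:R <= `|B * M| / sinh eps ^+ 2.
Proof.
have [corr norm] := perc_invariant t.
apply: novikoff_bound (sinh_gt0 eps_gt0) (ler0n _ _) corr _.
apply: le_trans (dot_CauchySchwarz _ _) _.
have wstar_le : dot wstar wstar <= M by rewrite -eucl_norm2E.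
by rewrite mulrA mulrC ler_pM ?dotvv_ge0.
Qed.

End Perceptron.

Theorem theorem4 (R : realType) (CH : R) (d : nat) (B M : R) :
  CH < 0 ->
  exists K : R, forall (N : nat) (x : 'I_N -> 'cV[R]_(d.+1)) (y : 'I_N -> R)
    (wstar : 'cV[R]_(d.+1)) (eps : R),
    (forall n, in_loid CH (x n)) ->
    (forall n, eucl_norm2 (x n) <= B) ->
    (forall n, y n = 1 \/ y n = -1) ->
    0 < eps ->
    mink wstar wstar = - CH ->
    eucl_norm2 wstar <= M ->
    (forall n, eps <= y n * asinh (mink wstar (x n))) ->
    exists t : nat,
      ((perc_traj x y t).2)%:R <= K / (sinh eps) ^+ 2 /\
      forall n, Num.sg (mink (perc_traj x y t).1 (x n)) = y n.
Proof.
move=> _; exists `|B * M| => N x y wstar eps _ x_bd y_sign eps_gt0 _ wstar_bd margin.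
set bound := `|B * M| / sinh eps ^+ 2.
have count_bd : forall t, (perc_traj x y t).2%:R <= bound.
  exact: perc_count_bound x_bd y_sign margin wstar_bd eps_gt0.
have count_le_trunc t : ((perc_traj x y t).2 <= Num.truncn bound)%N.
  by rewrite truncn_ge_nat ?count_bd // (le_trans (ler0n _ _) (count_bd 0%N)).
have [t plateau] := nondecreasing_bounded_plateau N (@perc_count_homo _ _ _ x y)
  count_le_trunc.
exists t; split; first exact: count_bd.
exact: perc_classified_of_plateau plateau.
Qed.
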